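(* For each integer $t\geq 1$ let $a_t\geq 1$ be an integer, and let $$f_t(X)=X^3+a_t^2(a_t^3-2)X^2-a_t(a_t^3-1)X+1+tX(a_tX-1).$$ Let $\theta_t^{(1)}<\theta_t^{(2)}$ denote the two positive real roots of $f_t(X)$. Fix a real number $0<\alpha<1/4$ and suppose $a_t\leq t^{\alpha}$ for all $t\geq 1$. Then for every positive integer $k\leq 1/\alpha-3$ there is $A'=A'(\alpha,k)>0$ such that $$|\theta_t^{(1)}|\leq a_t^{-k}\quad\text{and}\quad |\theta_t^{(2)}-a_t^{-1}|\leq a_t^{-k}$$ for all $t$ with $a_t\geq A'$.
   Context: For integers $t\geq 1$ and $a_t\geq 1$, the polynomial $f_t(X)$ has only real roots, exactly two of which are positive (the third is negative); $\theta_t^{(1)}<\theta_t^{(2)}$ denote these two positive roots. *)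

From Stdlib Require Import Reals Lra Lia.
Open Scope R_scope.

Definition f_poly (t a x : R) : R :=
  x ^ 3 + a ^ 2 * (a ^ 3 - 2) * x ^ 2 - a * (a ^ 3 - 1) * x + 1
  + t * x * (a * x - 1).

(** With [B = a^4 - a + t], the polynomial is
    [f_t(X) = X^3 + (aX - 1)((B - a)X - 1)]: away from the two roots [1/(B - a)]
    and [1/a] of the quadratic part, the cubic term [X^3] is too small to matter.
    Sign checks locate every positive root either below [3/B] or within
    [4/(a^3 B)] of [1/a], and the relation between two distinct roots rules
    out both of them lying in the same region. Finally [a <= t^alpha] with
    [alpha (k + 3) <= 1] gives [a^(k+3) <= t <= B], so both error bounds are
    at most [a^-k]; hence [A' = 3] works for all [alpha] and [k]. *)

From Stdlib Require Import Reals Lra Psatz.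
Open Scope R_scope.

Definition cubic (a B x : R) : R := x ^ 3 + a * (B - a) * x ^ 2 - B * x + 1.

Lemma f_poly_cubic (t a x : R) : f_poly t a x = cubic a (a ^ 4 - a + t) x.
Proof. unfold f_poly, cubic; ring. Qed.

Lemma cubic_split (a B x : R) :
  cubic a B x = x ^ 3 + (a * x - 1) * ((B - a) * x - 1).
Proof. unfold cubic; ring. Qed.

Lemma cubic_sub (a B u v : R) :
  cubic a B u - cubic a B v
  = (u - v) * (u ^ 2 + u * v + v ^ 2 + a * (B - a) * (u + v) - B).
Proof. unfold cubic; ring. Qed.

Lemma cubic_roots_relation (a B u v : R) :
  u <> v -> cubic a B u = 0 -> cubic a B v = 0 ->
  u ^ 2 + u * v + v ^ 2 + a * (B - a) * (u + v) = B.
Proof.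
  intros Huv Hu Hv.
  pose proof (cubic_sub a B u v) as E. rewrite Hu, Hv in E.
  assert (Hne : u - v <> 0) by lra.
  assert (Hz : u ^ 2 + u * v + v ^ 2 + a * (B - a) * (u + v) - B = 0).
  { apply (Rmult_eq_reg_l (u - v)); lra. }
  lra.
Qed.

Section CubicRoots.

Variables a B : R.
Hypothesis Ha : 3 <= a.
Hypothesis HB : 9 * a <= B.

Lemma cubic_pos_of_ge_inv (x : R) : 1 <= a * x -> 0 < cubic a B x.
Proof.
  intros Hx. rewrite cubic_split.
  assert (0 < x) by nra.
  assert (1 <= (B - a) * x) by nra.
  assert (0 <= (a * x - 1) * ((B - a) * x - 1)) by nra.
  nra.
Qed.

Lemma cubic_neg_of_mid (x : R) :
  0 < x -> 3 <= B * x -> 2 * a * x <= 1 -> cubic a B x < 0.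
Proof.
  intros Hx HBx Hax.
  replace (cubic a B x) with (1 - (B * x) * (1 - a * x) - a ^ 2 * x ^ 2 + x ^ 3)
    by (unfold cubic; ring).
  assert (x <= 1) by nra.
  assert (x ^ 3 <= a ^ 2 * x ^ 2).
  { replace (x ^ 3) with (x * x ^ 2) by ring.
    apply Rmult_le_compat_r; [apply pow2_ge_0|]. simpl; nra. }
  assert (3 / 2 <= (B * x) * (1 - a * x)) by nra.
  lra.
Qed.

Lemma cubic_neg_of_near_inv (x : R) :
  1 <= 2 * a * x -> 4 <= a ^ 2 * B * (1 - a * x) -> cubic a B x < 0.
Proof.
  intros Hx HE.
  assert (0 < x) by nra.
  assert (0 <= a ^ 2 * B) by (simpl; nra).
  assert (Hax : a * x <= 1) by nra.
  assert (Hpos : 0 < a ^ 3 * B) by (apply Rmult_lt_0_compat; [apply pow_lt|]; lra).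
  assert (Hx3 : (a * x) ^ 3 <= 1).
  { replace 1 with (1 ^ 3) by ring. apply pow_incr. nra. }
  assert (Hlin : a * (1 + a * x - B * x) <= 2 * a - B / 2) by nra.
  assert (Hscaled : a ^ 3 * B * cubic a B x < 0).
  { replace (a ^ 3 * B * cubic a B x) with
      ((a ^ 2 * B * (1 - a * x)) * (a * (1 + a * x - B * x)) + B * (a * x) ^ 3)
      by (unfold cubic; ring).
    assert ((a ^ 2 * B * (1 - a * x)) * (a * (1 + a * x - B * x))
            <= 4 * (2 * a - B / 2)) by nra.
    assert (B * (a * x) ^ 3 <= B) by nra.
    lra. }
  nra.
Qed.

Lemma cubic_root_cases (r : R) : 0 < r -> cubic a B r = 0 ->
  B * r < 3 \/ (a * r < 1 /\ a ^ 2 * B * (1 - a * r) < 4).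
Proof.
  intros Hr Hroot.
  destruct (Rlt_or_le (B * r) 3) as [Hsmall | HBr]; [now left | right].
  destruct (Rlt_or_le (a * r) 1) as [Har | Har].
  2: { pose proof (cubic_pos_of_ge_inv r Har). lra. }
  split; [exact Har |].
  destruct (Rlt_or_le (2 * a * r) 1) as [Hmid | Hnear].
  { pose proof (cubic_neg_of_mid r Hr HBr (Rlt_le _ _ Hmid)). lra. }
  destruct (Rlt_or_le (a ^ 2 * B * (1 - a * r)) 4) as [Hd | Hd]; [exact Hd |].
  pose proof (cubic_neg_of_near_inv r Hnear Hd). lra.
Qed.

Lemma cubic_roots_not_both_small (u v : R) :
  0 < u -> 0 < v -> u <> v -> cubic a B u = 0 -> cubic a B v = 0 ->
  B * u < 3 -> B * v < 3 -> False.
Proof.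
  intros Hu Hv Huv Hru Hrv HBu HBv.
  pose proof (cubic_roots_relation a B u v Huv Hru Hrv) as Hrel.
  assert (B * B * (u ^ 2 + u * v + v ^ 2) < 27) by nra.
  assert (B * (a * (B - a) * (u + v)) < 6 * a * (B - a)) by nra.
  nra.
Qed.

Lemma cubic_no_root_above_near_root (u v : R) :
  3 / 4 <= a * u -> u < v -> cubic a B u = 0 -> cubic a B v = 0 -> False.
Proof.
  intros Hau Huv Hru Hrv.
  pose proof (cubic_roots_relation a B u v (Rlt_not_eq _ _ Huv) Hru Hrv) as Hrel.
  assert (0 < u) by nra.
  assert (a * (B - a) * u >= (B - a) * (3 / 4)) by nra.
  assert (a * (B - a) * v >= (B - a) * (3 / 4)) by nra.
  nra.
Qed.

Lemma cubic_roots_location (u v : R) :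
  0 < u -> u < v -> cubic a B u = 0 -> cubic a B v = 0 ->
  B * u < 3 /\ a * v < 1 /\ a ^ 2 * B * (1 - a * v) < 4.
Proof.
  intros Hu Huv Hru Hrv.
  assert (Ha2B : 81 <= a ^ 2 * B) by (simpl; nra).
  assert (HBu : B * u < 3).
  { destruct (cubic_root_cases u Hu Hru) as [Hs | [Har Hd]]; [exact Hs |].
    exfalso. apply (cubic_no_root_above_near_root u v); nra. }
  destruct (cubic_root_cases v ltac:(lra) Hrv) as [Hs | Hnear].
  - exfalso. apply (cubic_roots_not_both_small u v); lra.
  - tauto.
Qed.

End CubicRoots.

Lemma cubic_roots_estimate (a B P u v : R) :
  3 <= a -> 1 <= P -> a ^ 3 * P <= B ->
  0 < u -> u < v -> cubic a B u = 0 -> cubic a B v = 0 ->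
  u <= / P /\ Rabs (v - / a) <= / P.
Proof.
  intros Ha HP HB Hu Huv Hru Hrv.
  assert (Ha3 : 27 <= a ^ 3) by (simpl; nra).
  assert (HB9 : 9 * a <= B) by (simpl in *; nra).
  destruct (cubic_roots_location a B Ha HB9 u v Hu Huv Hru Hrv) as [HBu [Hav Hd]].
  assert (HiP : P * / P = 1) by (field; lra).
  assert (0 < / P) by (apply Rinv_0_lt_compat; lra).
  split.
  - assert (u * P <= 1) by nra. nra.
  - set (d := 1 - a * v) in *.
    assert (E : v - / a = - (d * / a)) by (unfold d; field; lra).
    assert (0 < / a) by (apply Rinv_0_lt_compat; lra).
    assert (a * / a = 1) by (field; lra).
    assert (0 <= d) by (unfold d; lra).
    rewrite E, Rabs_Ropp, Rabs_right by nra.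
    assert (Hd5 : a ^ 5 * P * d <= a ^ 2 * B * d).
    { apply Rmult_le_compat_r; [lra |].
      replace (a ^ 5 * P) with (a ^ 2 * (a ^ 3 * P)) by ring.
      apply Rmult_le_compat_l; [apply pow_le|]; lra. }
    assert (a ^ 5 >= a) by (simpl in *; nra).
    assert (P * d <= a) by nra.
    nra.
Qed.

Lemma pow_le_of_le_Rpower (x T alpha : R) (n : nat) :
  0 <= x -> 1 <= T -> 0 < alpha -> INR n * alpha <= 1 ->
  x <= Rpower T alpha -> x ^ n <= T.
Proof.
  intros Hx HT Hal Hn HxT.
  assert (Hr0 : 0 < Rpower T alpha) by (unfold Rpower; apply exp_pos).
  apply Rle_trans with (Rpower T alpha ^ n); [apply pow_incr; lra |].
  rewrite <- Rpower_pow, Rpower_mult by exact Hr0.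
  rewrite <- (Rpower_1 T) at 2 by lra.
  apply Rle_Rpower; lra.
Qed.

Theorem mainTheorem3 :
  forall (alpha : R), 0 < alpha < / 4 ->
  forall (k : nat), (1 <= k)%nat -> INR k <= / alpha - 3 ->
  exists A' : R, 0 < A' /\
    forall (a : nat -> nat),
      (forall t : nat, (1 <= t)%nat -> (1 <= a t)%nat) ->
      (forall t : nat, (1 <= t)%nat -> INR (a t) <= Rpower (INR t) alpha) ->
      forall t : nat, (1 <= t)%nat -> A' <= INR (a t) ->
      forall theta1 theta2 : R,
        0 < theta1 -> theta1 < theta2 ->
        f_poly (INR t) (INR (a t)) theta1 = 0 ->
        f_poly (INR t) (INR (a t)) theta2 = 0 ->
        Rabs theta1 <= / (INR (a t)) ^ k /\
        Rabs (theta2 - / INR (a t)) <= / (INR (a t)) ^ k.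
Proof.
  intros alpha [Hal _] k _ Hk.
  exists 3. split; [lra |].
  intros a _ Hpow t Ht Ha3 th1 th2 Hth1 Hth12 Hf1 Hf2.
  set (x := INR (a t)) in *. set (T := INR t) in *.
  assert (HT : 1 <= T) by (apply (le_INR 1); exact Ht).
  assert (Hxk3 : x ^ (k + 3) <= T).
  { apply (pow_le_of_le_Rpower x T alpha); try lra; [| exact (Hpow t Ht)].
    rewrite plus_INR. simpl (INR 3).
    assert (alpha * / alpha = 1) by (field; lra).
    nra. }
  assert (1 <= x ^ 3) by (apply pow_R1_Rle; lra).
  assert (x <= x ^ 4) by (simpl in *; nra).
  assert (HB : x ^ 3 * x ^ k <= x ^ 4 - x + T)
    by (rewrite <- pow_add, Nat.add_comm; lra).
  rewrite f_poly_cubic in Hf1, Hf2.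
  destruct (cubic_roots_estimate x _ (x ^ k) th1 th2 Ha3
              (pow_R1_Rle x k ltac:(lra)) HB Hth1 Hth12 Hf1 Hf2) as [H1 H2].
  rewrite Rabs_right by lra. tauto.
Qed.
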